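(* Consider the ride-hailing model in the context. For any mixed-fleet equilibrium $(\bm x^A,\bm w^A,\bm x^C,\bm w^C)$, the tuple $(\bm x^A,\bm 0,\bm x^C,\bm w^C)$ is also a mixed-fleet equilibrium, and it generates the same platform profit.
   Context: Model. There are $L$ regions $\{1,\dots,L\}$. For regions $i,j$, $b_{ij}\ge0$ is the customer rate from $i$ to $j$; $b_i=\sum_j b_{ij}$ (assumed $>0$), $q_{ij}=b_{ij}/b_i$. Travel times satisfy $t_{ij}>0$ for $i\ne j$, $t_{ii}=0$. Constants: $p>0$, $c\ge0$, $R\in(0,1)$, $N>0$, $M\ge0$. For $i,\alpha$: $\tau^{dr}_{i\alpha}=t_{i\alpha}+\sum_j q_{\alpha j}t_{\alpha j}$, $r^A_{i\alpha}=p\sum_j q_{\alpha j}t_{\alpha j}-c\tau^{dr}_{i\alpha}$, $r^C_{i\alpha}=p(1-R)\sum_j q_{\alpha j}t_{\alpha j}-c\tau^{dr}_{i\alpha}$, $r^{C2P}_{i\alpha}=pR\sum_j q_{\alpha j}t_{\alpha j}$. A matrix $\bm x\in\mathbb R^{L\times L}_{\ge0}$ satisfies flow balance if $\sum_j(\sum_k x_{kj})q_{ji}=\sum_\alpha x_{i\alpha}$ for all $i$. Mixed-fleet equilibrium: a tuple $(\bm x^A,\bm w^A,\bm x^C,\bm w^C)$ with $\bm x^A,\bm x^C\in\mathbb R^{L\times L}_{\ge0}$, $\bm w^A,\bm w^C\in\mathbb R^L_{\ge0}$ such that (i) $\sum_j(x^A_{ji}+x^C_{ji})\le b_i$ for all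 $i$; $\bm x^A,\bm x^C$ satisfy flow balance; $\sum_{i,\alpha}(\tau^{dr}_{i\alpha}+w^A_\alpha)x^A_{i\alpha}\le M$ and $\sum_{i,\alpha}(\tau^{dr}_{i\alpha}+w^C_\alpha)x^C_{i\alpha}=N$; (ii) $\bm x^C$ maximizes $\sum_{i,\alpha}r^C_{i\alpha}x_{i\alpha}$ over all $\bm x\ge0$ satisfying flow balance and $\sum_{i,\alpha}(\tau^{dr}_{i\alpha}+w^C_\alpha)x_{i\alpha}=N$; (iii) the platform profit $\sum_{i,\alpha}r^A_{i\alpha}x^A_{i\alpha}+\sum_{i,\alpha}r^{C2P}_{i\alpha}x^C_{i\alpha}$ is maximal among all tuples satisfying (i) and (ii). *)

(* an abstract real field R. Regions are 'I_L. *)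
From mathcomp Require Import all_boot all_order all_algebra.
Set Implicit Arguments. Unset Strict Implicit. Unset Printing Implicit Defensive.
Import Order.TTheory GRing.Theory Num.Theory.
Local Open Scope ring_scope.

Section Model.
Variables (R : realFieldType) (L : nat).
Variables (b t : 'I_L -> 'I_L -> R) (p c Rr N M : R).

Definition bsum (i : 'I_L) : R := \sum_j b i j.
Definition q (i j : 'I_L) : R := b i j / bsum i.
Definition trip_time (a : 'I_L) : R := \sum_j q a j * t a j.
Definition tau_dr (i a : 'I_L) : R := t i a + trip_time a.
Definition rA (i a : 'I_L) : R := p * trip_time a - c * tau_dr i a.
Definition rC (i a : 'I_L) : R := p * (1 - Rr) * trip_time a - c * tau_dr i a.
Definition rC2P (i a : 'I_L) : R := p * Rr * trip_time a.

Definition nonneg_mx (x : 'I_L -> 'I_L -> R) : Prop := forall i j, 0 <= x i j.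
Definition nonneg_vec (w : 'I_L -> R) : Prop := forall i, 0 <= w i.

Definition flow_balance (x : 'I_L -> 'I_L -> R) : Prop :=
  forall i, \sum_j (\sum_k x k j) * q j i = \sum_a x i a.

Definition fleet_time (x : 'I_L -> 'I_L -> R) (w : 'I_L -> R) : R :=
  \sum_i \sum_a (tau_dr i a + w a) * x i a.

Definition reward (r x : 'I_L -> 'I_L -> R) : R := \sum_i \sum_a r i a * x i a.

Definition feasible (xA : 'I_L -> 'I_L -> R) (wA : 'I_L -> R)
    (xC : 'I_L -> 'I_L -> R) (wC : 'I_L -> R) : Prop :=
  [/\ nonneg_mx xA /\ nonneg_vec wA /\ nonneg_mx xC /\ nonneg_vec wC,
      (forall i, \sum_j (xA j i + xC j i) <= bsum i),
      flow_balance xA /\ flow_balance xC &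
      fleet_time xA wA <= M /\ fleet_time xC wC = N].

Definition drivers_optimal (xC : 'I_L -> 'I_L -> R) (wC : 'I_L -> R) : Prop :=
  forall x, nonneg_mx x -> flow_balance x -> fleet_time x wC = N ->
    reward rC x <= reward rC xC.

Definition platform_profit (xA xC : 'I_L -> 'I_L -> R) : R :=
  reward rA xA + reward rC2P xC.

Definition mixed_fleet_equilibrium (xA : 'I_L -> 'I_L -> R) (wA : 'I_L -> R)
    (xC : 'I_L -> 'I_L -> R) (wC : 'I_L -> R) : Prop :=
  [/\ feasible xA wA xC wC, drivers_optimal xC wC &
      forall xA' wA' xC' wC', feasible xA' wA' xC' wC' -> drivers_optimal xC' wC' ->
        platform_profit xA' xC' <= platform_profit xA xC].

Definition model_assumptions : Prop :=
  [/\ (forall i j, 0 <= b i j), (forall i, 0 < bsum i),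
      (forall i j, i != j -> 0 < t i j) /\ (forall i, t i i = 0),
      [/\ 0 < p, 0 <= c, 0 < Rr & Rr < 1] & 0 < N /\ 0 <= M].
End Model.

(* The autonomous waiting times w^A occur only in the autonomous fleet-time
   budget of (i); neither the drivers' problem (ii) nor the platform profit (iii)
   mentions them.  Since x^A >= 0, lowering w^A to 0 can only shrink that fleet
   time, so the budget constraint stays satisfied. *)
From mathcomp Require Import all_boot all_order all_algebra.
Import Order.TTheory GRing.Theory Num.Theory.
Local Open Scope ring_scope.

Section ZeroAutonomousWait.
Variables (R : realFieldType) (L : nat).
Variables (b t : 'I_L -> 'I_L -> R) (p c Rr N M : R).

Lemma fleet_time_le_wait (x : 'I_L -> 'I_L -> R) (w w' : 'I_L -> R) :
  nonneg_mx x -> (forall a, w a <= w' a) ->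
  fleet_time b t x w <= fleet_time b t x w'.
Proof.
move=> x_ge0 le_ww'; apply: ler_sum => i _; apply: ler_sum => a _.
by rewrite ler_wpM2r // lerD2l.
Qed.

Lemma feasible_zero_wait xA wA xC wC :
  feasible b t N M xA wA xC wC -> feasible b t N M xA (fun _ => 0) xC wC.
Proof.
move=> [[xA_ge0 [wA_ge0 [xC_ge0 wC_ge0]]] demand balance [budgetA budgetC]].
split=> //; first by do !split.
split=> //; apply: le_trans budgetA.
exact: fleet_time_le_wait.
Qed.

Lemma mixed_fleet_equilibrium_zero_wait xA wA xC wC :
  mixed_fleet_equilibrium b t p c Rr N M xA wA xC wC ->
  mixed_fleet_equilibrium b t p c Rr N M xA (fun _ => 0) xC wC.
Proof. by move=> [feas drivers best]; split; first exact: feasible_zero_wait feas. Qed.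

End ZeroAutonomousWait.

Theorem lemma1 (R : realFieldType) (L : nat) (b t : 'I_L -> 'I_L -> R)
    (p c Rr N M : R) :
  model_assumptions b t p c Rr N M ->
  forall (xA : 'I_L -> 'I_L -> R) (wA : 'I_L -> R)
         (xC : 'I_L -> 'I_L -> R) (wC : 'I_L -> R),
    mixed_fleet_equilibrium b t p c Rr N M xA wA xC wC ->
    mixed_fleet_equilibrium b t p c Rr N M xA (fun _ => 0) xC wC /\
    platform_profit b t p c Rr xA xC = platform_profit b t p c Rr xA xC.
Proof.
move=> _ xA wA xC wC eq_w.
by split=> //; exact: mixed_fleet_equilibrium_zero_wait eq_w.
Qed.
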